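(* Let $\gamma_a,\gamma_s>0$, $\lambda\ge0$, $q>0$, $\sigma_B>0$, $\varepsilon_a\in(0,2)$, and let $\beta_a,\beta_s:\mathbb R\to\mathbb R$ be globally Lipschitz continuous with $\beta_a\ge0$, $\beta_s>0$. For every $(T_a^{(0)},T_s^{(0)})\in[0,+\infty)^2$, the solution $(T_a(t),T_s(t))$ of \[ \begin{cases} \gamma_a T_a'=-\lambda(T_a-T_s)+\varepsilon_a\sigma_B|T_s|^3T_s-2\varepsilon_a\sigma_B|T_a|^3T_a+q\beta_a(T_a),\\ \gamma_s T_s'=-\lambda(T_s-T_a)-\sigma_B|T_s|^3T_s+\varepsilon_a\sigma_B|T_a|^3T_a+q\beta_s(T_s),\\ T_a(0)=T_a^{(0)},\quad T_s(0)=T_s^{(0)} \end{cases} \] converges as $t\to+\infty$ to some equilibrium point of the system. Moreover, there exists $T\ge0$ such that $t\mapsto T_a(t)$ and $t\mapsto T_s(t)$ are monotone on $[T,+\infty)$. *)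

From Stdlib Require Import Reals.
From Coquelicot Require Import Coquelicot.
Open Scope R_scope.

Definition lipschitz (f : R -> R) : Prop :=
  exists L : R, 0 <= L /\ forall x y : R, Rabs (f x - f y) <= L * Rabs (x - y).

(* right-hand sides of the system (multiplied by gamma_a resp. gamma_s) *)
Definition Fa (lam q sigB epsa : R) (ba : R -> R) (Ta Ts : R) : R :=
  - lam * (Ta - Ts) + epsa * sigB * (Rabs Ts ^ 3 * Ts)
  - 2 * epsa * sigB * (Rabs Ta ^ 3 * Ta) + q * ba Ta.

Definition Fs (lam q sigB epsa : R) (bs : R -> R) (Ta Ts : R) : R :=
  - lam * (Ts - Ta) - sigB * (Rabs Ts ^ 3 * Ts)
  + epsa * sigB * (Rabs Ta ^ 3 * Ta) + q * bs Ts.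

Definition is_equilibrium (lam q sigB epsa : R) (ba bs : R -> R) (a s : R) : Prop :=
  Fa lam q sigB epsa ba a s = 0 /\ Fs lam q sigB epsa bs a s = 0.

Definition monotone_from (T : R) (f : R -> R) : Prop :=
  (forall t1 t2, T <= t1 -> t1 <= t2 -> f t1 <= f t2) \/
  (forall t1 t2, T <= t1 -> t1 <= t2 -> f t2 <= f t1).

From Stdlib Require Import Reals Lra Classical.
From Coquelicot Require Import Coquelicot.
Open Scope R_scope.

(* The system is cooperative: [Fa] is nondecreasing in [Ts] and [Fs] in [Ta].  Its quartic
   terms dominate on a large rectangle with corners [(A, k A)] and [(- A, - k A)], where
   [k ^ 4 = (epsa + 2) / 2], so this rectangle is forward invariant and the fields are
   Lipschitz along the trajectory.  Comparing the trajectory with its time shifts (Kamke's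
   comparison principle) shows that once both derivatives are [>= 0], or both [<= 0], they
   stay so; if this never happens, neither derivative ever vanishes and each keeps its sign.
   Either way both components are eventually monotone and bounded, hence converge, and the
   derivatives converge to the field at the limit point, which must therefore vanish. *)

Lemma is_derive_linear_approx (f : R -> R) t l : is_derive f t l ->
  forall eps, 0 < eps -> exists d, 0 < d /\ forall h, Rabs h < d ->
    Rabs (f (t + h) - f t - l * h) <= eps * Rabs h.
Proof.
  intros Hd eps Heps. apply is_derive_Reals in Hd.
  destruct (Hd eps Heps) as [d Hd'].
  exists d; split; [apply cond_pos|]. intros h Hh.
  destruct (Req_dec h 0) as [->|Hn].
  { rewrite Rplus_0_r, Rabs_R0. replace (f t - f t - l * 0) with 0 by ring.
    rewrite Rabs_R0; lra. }
  replace (f (t + h) - f t - l * h) with (((f (t + h) - f t) / h - l) * h)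
    by (field; exact Hn).
  rewrite Rabs_mult. apply Rmult_le_compat_r; [apply Rabs_pos|].
  apply Rlt_le, Hd'; assumption.
Qed.

Lemma is_derive_continuous (f : R -> R) t l : is_derive f t l -> continuous f t.
Proof.
  intros Hd. apply (ex_derive_continuous (K := R_AbsRing) (V := R_NormedModule)).
  exists l. exact Hd.
Qed.

Lemma is_derive_continuity_pt (f : R -> R) t l : is_derive f t l -> continuity_pt f t.
Proof. intros Hd. apply continuity_pt_filterlim, (is_derive_continuous f t l Hd). Qed.

Lemma continuous_sign_persists (f : R -> R) t c : continuous f t -> c < f t ->
  exists d, 0 < d /\ forall r, Rabs (r - t) < d -> c < f r.
Proof.
  intros Hc Hlt. unfold continuous in Hc. rewrite filterlim_locally in Hc.
  destruct (Hc (mkposreal (f t - c) ltac:(lra))) as [d Hd].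
  exists d; split; [apply cond_pos|]. intros r Hr.
  specialize (Hd r Hr). apply Rabs_lt_between' in Hd. simpl in Hd. lra.
Qed.

Lemma is_derive_left_upper_bound (f : R -> R) t l M : 0 < t -> is_derive f t l ->
  (forall r, 0 <= r < t -> f r < M) -> f t <= M /\ (f t = M -> 0 <= l).
Proof.
  intros Ht Hd Hlt.
  assert (Hleft : forall d, 0 < d -> exists r, 0 <= r < t /\ t - d < r).
  { intros d Hd0. exists (t - Rmin d t / 2).
    pose proof (Rmin_l d t). pose proof (Rmin_r d t).
    pose proof (Rmin_glb_lt d t 0 Hd0 Ht). lra. }
  split.
  - apply Rnot_lt_le. intros HM.
    destruct (continuous_sign_persists f t M (is_derive_continuous f t l Hd) HM)
      as [d [Hd0 Hd1]].
    destruct (Hleft d Hd0) as [r [Hr Hrd]].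
    specialize (Hd1 r ltac:(rewrite Rabs_left; lra)). specialize (Hlt r Hr). lra.
  - intros HM. apply Rnot_lt_le. intros Hl.
    destruct (is_derive_linear_approx f t l Hd (- l / 2) ltac:(lra)) as [d [Hd0 Hd1]].
    destruct (Hleft d Hd0) as [r [Hr Hrd]].
    specialize (Hd1 (r - t) ltac:(rewrite Rabs_left; lra)).
    replace (t + (r - t)) with r in Hd1 by ring.
    rewrite (Rabs_left (r - t)) in Hd1 by lra. apply Rabs_le_between in Hd1.
    specialize (Hlt r Hr). nra.
Qed.

Lemma is_derive_left_interval (f : R -> R) t l m M : 0 < t -> is_derive f t l ->
  (forall r, 0 <= r < t -> m < f r < M) ->
  m <= f t <= M /\ (f t = M -> 0 <= l) /\ (f t = m -> l <= 0).
Proof.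
  intros Ht Hd Hin.
  destruct (is_derive_left_upper_bound f t l M Ht Hd) as [HM HMl].
  { intros r Hr. apply Hin, Hr. }
  destruct (is_derive_left_upper_bound (fun r => - f r) t (- l) (- m) Ht) as [Hm Hml].
  { apply (is_derive_opp f t l Hd). }
  { intros r Hr. specialize (Hin r Hr). lra. }
  repeat split; try lra.
Qed.

Lemma right_continuous_of_is_derive (f : R -> R) t l : is_derive f t l ->
  filterlim f (at_right t) (locally (f t)).
Proof.
  intros Hd. eapply filterlim_filter_le_1; [apply filter_le_within|].
  apply (is_derive_continuous f t l Hd).
Qed.

Lemma right_continuous_interval_persists (f : R -> R) t m M :
  filterlim f (at_right t) (locally (f t)) -> m < f t < M ->
  exists d, 0 < d /\ forall r, t < r < t + d -> m < f r < M.
Proof.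
  intros Hc Hin. rewrite filterlim_locally in Hc.
  assert (He : 0 < Rmin (f t - m) (M - f t)) by (apply Rmin_glb_lt; lra).
  destruct (Hc (mkposreal _ He)) as [d Hd].
  exists d; split; [apply cond_pos|]. intros r Hr.
  assert (Hb : ball t d r).
  { change (Rabs (r - t) < d). rewrite Rabs_pos_eq; lra. }
  specialize (Hd r Hb ltac:(lra)). change (Rabs (f r - f t) < Rmin (f t - m) (M - f t)) in Hd.
  pose proof (Rmin_l (f t - m) (M - f t)). pose proof (Rmin_r (f t - m) (M - f t)).
  apply Rabs_lt_between' in Hd. lra.
Qed.

Lemma real_induction (P : R -> Prop) :
  (forall t, 0 <= t -> (forall r, 0 <= r < t -> P r) -> P t) ->
  (forall t, 0 <= t -> (forall r, 0 <= r <= t -> P r) ->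
     exists d, 0 < d /\ forall r, t < r < t + d -> P r) ->
  forall t, 0 <= t -> P t.
Proof.
  intros Hclosed Hopen t1 Ht1. apply NNPP. intros HnP.
  set (E := fun t => 0 <= t /\ forall r, 0 <= r <= t -> P r).
  assert (HE0 : E 0).
  { split; [lra|]. intros r Hr. replace r with 0 by lra.
    apply Hclosed; [lra|]. intros; lra. }
  destruct (completeness E) as [ts [Hub Hlub]].
  { exists t1. intros t [Ht HPt]. apply Rnot_lt_le. intros Hlt.
    apply HnP, HPt. lra. }
  { exists 0. exact HE0. }
  assert (Hts : 0 <= ts) by (apply Hub, HE0).
  assert (Hbelow : forall r, 0 <= r < ts -> P r).
  { intros r Hr. apply NNPP. intros HnPr.
    assert (ts <= r); [|lra]. apply Hlub. intros t [Ht HPt].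
    apply Rnot_lt_le. intros Hlt. apply HnPr, HPt. lra. }
  assert (Hupto : forall r, 0 <= r <= ts -> P r).
  { intros r Hr. destruct (Rlt_le_dec r ts) as [Hlt|Hge].
    - apply Hbelow. lra.
    - replace r with ts by lra. apply Hclosed; assumption. }
  destruct (Hopen ts Hts Hupto) as [d [Hd HPd]].
  assert (E (ts + d / 2)).
  { split; [lra|]. intros r Hr. destruct (Rle_lt_dec r ts).
    - apply Hupto. lra.
    - apply HPd. lra. }
  assert (ts + d / 2 <= ts) by (apply Hub; assumption). lra.
Qed.

Lemma rectangle_forward_invariant (Ga Gs : R -> R -> R) (xa xs : R -> R)
    ma Ma ms Ms :
  (forall t, 0 < t -> is_derive xa t (Ga (xa t) (xs t))) ->
  (forall t, 0 < t -> is_derive xs t (Gs (xa t) (xs t))) ->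
  filterlim xa (at_right 0) (locally (xa 0)) ->
  filterlim xs (at_right 0) (locally (xs 0)) ->
  (forall s, ms <= s <= Ms -> Ga Ma s < 0 /\ 0 < Ga ma s) ->
  (forall a, ma <= a <= Ma -> Gs a Ms < 0 /\ 0 < Gs a ms) ->
  ma < xa 0 < Ma -> ms < xs 0 < Ms ->
  forall t, 0 <= t -> ma < xa t < Ma /\ ms < xs t < Ms.
Proof.
  intros Hxa Hxs Hca Hcs HGa HGs H0a H0s.
  apply real_induction.
  - intros t Ht Hbefore. destruct (Rle_lt_or_eq_dec 0 t Ht) as [Htpos|<-]; [|auto].
    destruct (is_derive_left_interval xa t _ ma Ma Htpos (Hxa t Htpos))
      as [Ha [HaM Ham]].
    { intros r Hr. apply Hbefore, Hr. }
    destruct (is_derive_left_interval xs t _ ms Ms Htpos (Hxs t Htpos))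
      as [Hs [HsM Hsm]].
    { intros r Hr. apply Hbefore, Hr. }
    destruct (HGa (xs t) Hs) as [HGaM HGam].
    destruct (HGs (xa t) Ha) as [HGsM HGsm].
    repeat split; apply Rnot_le_lt; intros Hle.
    + assert (Heq : xa t = ma) by lra. specialize (Ham Heq). rewrite Heq in Ham. lra.
    + assert (Heq : xa t = Ma) by lra. specialize (HaM Heq). rewrite Heq in HaM. lra.
    + assert (Heq : xs t = ms) by lra. specialize (Hsm Heq). rewrite Heq in Hsm. lra.
    + assert (Heq : xs t = Ms) by lra. specialize (HsM Heq). rewrite Heq in HsM. lra.
  - intros t Ht Hupto. destruct (Hupto t (conj Ht (Rle_refl t))) as [Ha Hs].
    assert (Hrc : forall (x : R -> R) (G : R -> R -> R),
      (forall t, 0 < t -> is_derive x t (G (xa t) (xs t))) ->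
      filterlim x (at_right 0) (locally (x 0)) ->
      filterlim x (at_right t) (locally (x t))).
    { intros x G Hx Hx0. destruct (Rle_lt_or_eq_dec 0 t Ht) as [Htpos|<-]; [|exact Hx0].
      apply (right_continuous_of_is_derive x t _ (Hx t Htpos)). }
    destruct (right_continuous_interval_persists xa t ma Ma (Hrc xa Ga Hxa Hca) Ha)
      as [da [Hda Ha']].
    destruct (right_continuous_interval_persists xs t ms Ms (Hrc xs Gs Hxs Hcs) Hs)
      as [ds [Hds Hs']].
    exists (Rmin da ds). split; [apply Rmin_glb_lt; assumption|].
    intros r Hr. pose proof (Rmin_l da ds). pose proof (Rmin_r da ds).
    split; [apply Ha' | apply Hs']; lra.
Qed.

Lemma nondecreasing_of_deriv_nonneg (f df : R -> R) T :
  (forall t, T <= t -> is_derive f t (df t)) -> (forall t, T <= t -> 0 <= df t) ->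
  forall t1 t2, T <= t1 -> t1 <= t2 -> f t1 <= f t2.
Proof.
  intros Hd Hpos t1 t2 H1 H12.
  destruct (MVT_gen f t1 t2 df) as [c [Hc Heq]].
  - intros x Hx. rewrite Rmin_left in Hx by lra. apply Hd. lra.
  - intros x Hx. rewrite Rmin_left in Hx by lra.
    apply (is_derive_continuity_pt f x (df x)), Hd. lra.
  - rewrite Rmin_left, Rmax_right in Hc by lra.
    assert (0 <= df c) by (apply Hpos; lra). nra.
Qed.

Lemma nonincreasing_of_deriv_nonpos (f df : R -> R) T :
  (forall t, T <= t -> is_derive f t (df t)) -> (forall t, T <= t -> df t <= 0) ->
  forall t1 t2, T <= t1 -> t1 <= t2 -> f t2 <= f t1.
Proof.
  intros Hd Hneg t1 t2 H1 H12.
  assert (- f t1 <= - f t2); [|lra].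
  apply (nondecreasing_of_deriv_nonneg (fun t => - f t) (fun t => - df t) T);
    try assumption.
  - intros t Ht. apply (is_derive_opp f t (df t)), Hd, Ht.
  - intros t Ht. specialize (Hneg t Ht). lra.
Qed.

Lemma monotone_from_of_deriv_sign (f df : R -> R) T :
  (forall t, T <= t -> is_derive f t (df t)) ->
  (forall t, T <= t -> 0 <= df t) \/ (forall t, T <= t -> df t <= 0) ->
  monotone_from T f.
Proof.
  intros Hd [Hpos|Hneg].
  - left. apply (nondecreasing_of_deriv_nonneg f df T Hd Hpos).
  - right. apply (nonincreasing_of_deriv_nonpos f df T Hd Hneg).
Qed.

Lemma nondecreasing_bounded_is_lim (f : R -> R) T B :
  (forall t1 t2, T <= t1 -> t1 <= t2 -> f t1 <= f t2) -> (forall t, T <= t -> f t <= B) ->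
  exists l : R, is_lim f p_infty l /\ f T <= l <= B.
Proof.
  intros Hm Hb.
  destruct (completeness (fun y => exists t, T <= t /\ y = f t)) as [l [Hub Hlub]].
  - exists B. intros y [t [Ht ->]]. auto.
  - exists (f T), T. split; [lra|reflexivity].
  - exists l. split; [|split].
    + apply is_lim_spec. intros eps. simpl.
      destruct (classic (exists t, T <= t /\ l - eps < f t)) as [[t [Ht Hf]]|Hn].
      * exists t. intros x Hx. assert (f t <= f x) by (apply Hm; lra).
        assert (f x <= l) by (apply Hub; exists x; split; [lra|reflexivity]).
        apply Rabs_def1; pose proof (cond_pos eps); lra.
      * exfalso. assert (l <= l - eps); [|pose proof (cond_pos eps); lra].
        apply Hlub. intros y [t [Ht ->]]. apply Rnot_lt_le. intros Hlt.
        apply Hn. exists t. auto.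
    + apply Hub. exists T. split; [lra|reflexivity].
    + apply Hlub. intros y [t [Ht ->]]. auto.
Qed.

Lemma monotone_bounded_is_lim (f : R -> R) T m M : monotone_from T f ->
  (forall t, T <= t -> m <= f t <= M) -> exists l : R, is_lim f p_infty l /\ m <= l <= M.
Proof.
  intros [Hinc|Hdec] Hb.
  - destruct (nondecreasing_bounded_is_lim f T M Hinc) as [l [Hl Hbl]].
    { intros t Ht. apply Hb, Ht. }
    exists l. split; [exact Hl|]. specialize (Hb T (Rle_refl T)). lra.
  - destruct (nondecreasing_bounded_is_lim (fun t => - f t) T (- m)) as [l [Hl Hbl]].
    { intros t1 t2 H1 H12. specialize (Hdec t1 t2 H1 H12). lra. }
    { intros t Ht. specialize (Hb t Ht). lra. }
    exists (- l). split.
    + apply is_lim_opp in Hl. eapply is_lim_ext; [|exact Hl]. intros y. simpl. ring.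
    + specialize (Hb T (Rle_refl T)). simpl in Hbl. lra.
Qed.

(* By the mean value theorem [f (t + 1) - f t = df x] for some [x] in [[t, t + 1]]. *)
Lemma is_lim_derive_at_infinity_zero (f df : R -> R) (l c : R) :
  (forall t, 0 < t -> is_derive f t (df t)) -> is_lim f p_infty l ->
  is_lim df p_infty c -> c = 0.
Proof.
  intros Hd Hl Hdf. apply is_lim_spec in Hl. apply is_lim_spec in Hdf.
  destruct (Req_dec c 0) as [|Hc]; [assumption|]. exfalso.
  assert (Hac : 0 < Rabs c) by (apply Rabs_pos_lt, Hc).
  destruct (Hdf (mkposreal (Rabs c / 2) ltac:(lra))) as [M1 HM1].
  destruct (Hl (mkposreal (Rabs c / 4) ltac:(lra))) as [M2 HM2]. simpl in HM1, HM2.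
  set (t := Rmax 1 (Rmax M1 M2) + 1).
  assert (Ht : 1 < t /\ M1 < t /\ M2 < t).
  { unfold t. pose proof (Rmax_l 1 (Rmax M1 M2)). pose proof (Rmax_r 1 (Rmax M1 M2)).
    pose proof (Rmax_l M1 M2). pose proof (Rmax_r M1 M2). lra. }
  destruct (MVT_gen f t (t + 1) df) as [x [Hx Heq]].
  - intros y Hy. rewrite Rmin_left in Hy by lra. apply Hd. lra.
  - intros y Hy. rewrite Rmin_left in Hy by lra.
    apply (is_derive_continuity_pt f y (df y)), Hd. lra.
  - rewrite Rmin_left, Rmax_right in Hx by lra.
    replace (t + 1 - t) with 1 in Heq by ring. rewrite Rmult_1_r in Heq.
    assert (Hft := HM2 t ltac:(lra)). assert (Hft1 := HM2 (t + 1) ltac:(lra)).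
    assert (Hdfx := HM1 x ltac:(lra)).
    apply Rabs_lt_between' in Hft. apply Rabs_lt_between' in Hft1.
    apply Rabs_lt_between' in Hdfx.
    unfold Rabs in *. destruct (Rcase_abs c); lra.
Qed.

Lemma gronwall_exp (V dV : R -> R) C t0 :
  (forall t, t0 <= t -> is_derive V t (dV t)) -> (forall t, t0 <= t -> dV t <= C * V t) ->
  forall t, t0 <= t -> V t <= exp (C * (t - t0)) * V t0.
Proof.
  intros HV HdV t Ht.
  set (W := fun t => exp (- C * t) * V t).
  assert (HW : forall t, t0 <= t -> is_derive W t (exp (- C * t) * (dV t - C * V t))).
  { intros s Hs. unfold W.
    assert (He : is_derive (fun s => exp (- C * s)) s (- C * exp (- C * s)))
      by (auto_derive; [exact I | ring]).
    replace (exp (- C * s) * (dV s - C * V s))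
      with (- C * exp (- C * s) * V s + exp (- C * s) * dV s) by ring.
    apply (is_derive_mult (fun s => exp (- C * s)) V); [exact He | apply HV, Hs |].
    intros; apply Rmult_comm. }
  assert (HWt : W t <= W t0).
  { apply (nonincreasing_of_deriv_nonpos W _ t0 HW); [|lra|lra].
    intros s Hs. specialize (HdV s Hs). pose proof (exp_pos (- C * s)). nra. }
  unfold W in HWt.
  replace (V t) with (exp (C * t) * (exp (- C * t) * V t))
    by (rewrite <- Rmult_assoc, <- exp_plus; replace (C * t + - C * t) with 0 by ring;
        rewrite exp_0; ring).
  replace (exp (C * (t - t0))) with (exp (C * t) * exp (- C * t0))
    by (rewrite <- exp_plus; f_equal; ring).
  rewrite Rmult_assoc. apply Rmult_le_compat_l; [apply Rlt_le, exp_pos | exact HWt].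
Qed.

Definition pos_part (x : R) : R := Rmax x 0.

Lemma pos_part_ge0 x : 0 <= pos_part x.
Proof. apply Rmax_r. Qed.

Lemma pos_part_ge x : x <= pos_part x.
Proof. apply Rmax_l. Qed.

Lemma pos_part_id x : 0 <= x -> pos_part x = x.
Proof. intros Hx. apply Rmax_left, Hx. Qed.

Lemma pos_part_0 x : x <= 0 -> pos_part x = 0.
Proof. intros Hx. apply Rmax_right, Hx. Qed.

Lemma pos_part_le x b : x <= b -> 0 <= b -> pos_part x <= b.
Proof. intros. apply Rmax_lub; assumption. Qed.

Lemma Rmax_sub_pos_part s r : Rmax s r - r = pos_part (s - r).
Proof. unfold pos_part, Rmax. destruct (Rle_dec s r), (Rle_dec (s - r) 0); lra. Qed.

Lemma is_derive_pos_part_sqr x : is_derive (fun y => pos_part y ^ 2) x (2 * pos_part x).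
Proof.
  assert (Herr : forall h, Rabs (pos_part (x + h) ^ 2 - pos_part x ^ 2 - 2 * pos_part x * h)
                          <= h * h).
  { intros h. apply Rabs_le_between.
    destruct (Rle_dec 0 x), (Rle_dec 0 (x + h));
      rewrite ?(pos_part_id x), ?(pos_part_0 x), ?(pos_part_id (x + h)),
        ?(pos_part_0 (x + h)) by lra; split; nra. }
  apply is_derive_Reals. intros eps Heps. exists (mkposreal eps Heps).
  intros h Hh Hlt. simpl in Hlt.
  replace ((pos_part (x + h) ^ 2 - pos_part x ^ 2) / h - 2 * pos_part x)
    with ((pos_part (x + h) ^ 2 - pos_part x ^ 2 - 2 * pos_part x * h) / h)
    by (field; exact Hh).
  unfold Rdiv. rewrite Rabs_mult, Rabs_inv.
  assert (Hh0 : 0 < Rabs h) by (apply Rabs_pos_lt, Hh).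
  apply (Rmult_lt_reg_r (Rabs h)); [exact Hh0|].
  rewrite Rmult_assoc, Rinv_l, Rmult_1_r by lra.
  eapply Rle_lt_trans; [apply Herr|].
  assert (h * h = Rabs h * Rabs h) by (rewrite <- Rabs_mult, Rabs_pos_eq; nra).
  nra.
Qed.

(* Gronwall for [V = pos_part da ^ 2 + pos_part ds ^ 2]: the term of [V'] coming from a
   nonpositive [da] or [ds] vanishes, so one-sided bounds suffice, and
   [2 a b <= a ^ 2 + b ^ 2] gives [V' <= 4 K V]. *)
Lemma pos_part_energy_bound (da ds Da Ds : R -> R) K t0 : 0 <= K ->
  (forall t, t0 <= t -> is_derive da t (Da t)) ->
  (forall t, t0 <= t -> is_derive ds t (Ds t)) ->
  (forall t, t0 <= t -> 0 < da t -> Da t <= K * (da t + pos_part (ds t))) ->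
  (forall t, t0 <= t -> 0 < ds t -> Ds t <= K * (ds t + pos_part (da t))) ->
  forall t, t0 <= t -> pos_part (da t) ^ 2 + pos_part (ds t) ^ 2 <=
    exp (4 * K * (t - t0)) * (pos_part (da t0) ^ 2 + pos_part (ds t0) ^ 2).
Proof.
  intros HK Hda Hds Ha Hs.
  assert (Hpart : forall (d D : R -> R) (e : R -> R) t, t0 <= t ->
            (0 < d t -> D t <= K * (d t + e t)) ->
            D t * pos_part (d t) <= K * pos_part (d t) * (pos_part (d t) + e t)).
  { intros d D e t Ht HD. destruct (Rle_dec (d t) 0).
    - rewrite pos_part_0 by lra. lra.
    - rewrite pos_part_id by lra. specialize (HD ltac:(lra)). nra. }
  apply (gronwall_exp (fun t => pos_part (da t) ^ 2 + pos_part (ds t) ^ 2)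
           (fun t => Da t * (2 * pos_part (da t)) + Ds t * (2 * pos_part (ds t)))).
  - intros t Ht. apply (is_derive_plus (fun t => pos_part (da t) ^ 2)).
    + apply (is_derive_comp (fun y => pos_part y ^ 2) da);
        [apply is_derive_pos_part_sqr | apply Hda, Ht].
    + apply (is_derive_comp (fun y => pos_part y ^ 2) ds);
        [apply is_derive_pos_part_sqr | apply Hds, Ht].
  - intros t Ht.
    pose proof (Hpart da Da (fun t => pos_part (ds t)) t Ht (Ha t Ht)) as Pa.
    pose proof (Hpart ds Ds (fun t => pos_part (da t)) t Ht (Hs t Ht)) as Ps.
    simpl in Pa, Ps.
    pose proof (pos_part_ge0 (da t)). pose proof (pos_part_ge0 (ds t)).
    pose proof (pow2_ge_0 (pos_part (da t) - pos_part (ds t))). nra.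
Qed.

(* At [t0] the backward increments [fa t0 - fa (t0 + h)] are [o(h)], whereas
   [fa' t < 0] would make [fa t - fa (t + h)] of order [h]. *)
Lemma deriv_nonneg_of_shift_comparison (fa fs : R -> R) t0 t E wa0 ws0 wa : 0 <= E ->
  (forall h, 0 < h ->
     pos_part (fa t - fa (t + h)) ^ 2 + pos_part (fs t - fs (t + h)) ^ 2 <=
     E * (pos_part (fa t0 - fa (t0 + h)) ^ 2 + pos_part (fs t0 - fs (t0 + h)) ^ 2)) ->
  is_derive fa t0 wa0 -> is_derive fs t0 ws0 -> 0 <= wa0 -> 0 <= ws0 ->
  is_derive fa t wa -> 0 <= wa.
Proof.
  intros HE Hcmp Da0 Ds0 Hwa0 Hws0 Da. apply Rnot_lt_le. intros Hwa.
  set (eps := - wa / (4 * (1 + E))).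
  assert (Heps : 0 < eps) by (unfold eps; apply Rdiv_lt_0_compat; lra).
  assert (Hwa_eps : - wa = 4 * (1 + E) * eps) by (unfold eps; field; lra).
  destruct (is_derive_linear_approx fa t0 wa0 Da0 eps Heps) as [d1 [Hd1 H1]].
  destruct (is_derive_linear_approx fs t0 ws0 Ds0 eps Heps) as [d2 [Hd2 H2]].
  destruct (is_derive_linear_approx fa t wa Da eps Heps) as [d3 [Hd3 H3]].
  set (h := Rmin d1 (Rmin d2 d3) / 2).
  assert (Hh : 0 < h /\ h < d1 /\ h < d2 /\ h < d3).
  { unfold h. pose proof (Rmin_l d1 (Rmin d2 d3)). pose proof (Rmin_r d1 (Rmin d2 d3)).
    pose proof (Rmin_l d2 d3). pose proof (Rmin_r d2 d3).
    pose proof (Rmin_glb_lt d1 (Rmin d2 d3) 0 Hd1 (Rmin_glb_lt d2 d3 0 Hd2 Hd3)). lra. }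
  assert (Habs : Rabs h = h) by (apply Rabs_pos_eq; lra).
  specialize (H1 h ltac:(lra)). specialize (H2 h ltac:(lra)). specialize (H3 h ltac:(lra)).
  rewrite Habs in H1, H2, H3.
  apply Rabs_le_between in H1. apply Rabs_le_between in H2. apply Rabs_le_between in H3.
  assert (B1 : pos_part (fa t0 - fa (t0 + h)) <= eps * h) by (apply pos_part_le; nra).
  assert (B2 : pos_part (fs t0 - fs (t0 + h)) <= eps * h) by (apply pos_part_le; nra).
  assert (B3 : 3 * (1 + E) * (eps * h) <= pos_part (fa t - fa (t + h))).
  { eapply Rle_trans; [|apply pos_part_ge]. nra. }
  specialize (Hcmp h (proj1 Hh)).
  pose proof (pos_part_ge0 (fa t0 - fa (t0 + h))).
  pose proof (pos_part_ge0 (fs t0 - fs (t0 + h))).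
  pose proof (pos_part_ge0 (fs t - fs (t + h))).
  set (w := eps * h) in *. assert (0 < w) by (unfold w; nra).
  assert (E * (pos_part (fa t0 - fa (t0 + h)) ^ 2 + pos_part (fs t0 - fs (t0 + h)) ^ 2)
          <= E * (2 * w ^ 2)).
  { apply Rmult_le_compat_l; [exact HE|]. simpl. nra. }
  assert ((3 * (1 + E) * w) ^ 2 <= pos_part (fa t - fa (t + h)) ^ 2)
    by (apply pow_incr; nra).
  assert (0 <= pos_part (fs t - fs (t + h)) ^ 2) by (apply pow2_ge_0).
  assert (E * (2 * w ^ 2) < (3 * (1 + E) * w) ^ 2) by (simpl; nra).
  lra.
Qed.

Lemma derivs_nonneg_of_shift_comparison (fa fs : R -> R) t0 t E wa0 ws0 wa ws : 0 <= E ->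
  (forall h, 0 < h ->
     pos_part (fa t - fa (t + h)) ^ 2 + pos_part (fs t - fs (t + h)) ^ 2 <=
     E * (pos_part (fa t0 - fa (t0 + h)) ^ 2 + pos_part (fs t0 - fs (t0 + h)) ^ 2)) ->
  is_derive fa t0 wa0 -> is_derive fs t0 ws0 -> 0 <= wa0 -> 0 <= ws0 ->
  is_derive fa t wa -> is_derive fs t ws -> 0 <= wa /\ 0 <= ws.
Proof.
  intros HE Hcmp Da0 Ds0 Hwa0 Hws0 Da Ds. split.
  - exact (deriv_nonneg_of_shift_comparison fa fs t0 t E wa0 ws0 wa HE Hcmp
             Da0 Ds0 Hwa0 Hws0 Da).
  - refine (deriv_nonneg_of_shift_comparison fs fa t0 t E ws0 wa0 ws HE _
              Ds0 Da0 Hws0 Hwa0 Ds).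
    intros h Hh. rewrite Rplus_comm, (Rplus_comm (pos_part (fs t0 - _) ^ 2)).
    apply Hcmp, Hh.
Qed.

Lemma continuous_nonvanishing_constant_sign (g : R -> R) T :
  (forall t, T <= t -> continuity_pt g t) -> (forall t, T <= t -> g t <> 0) ->
  (forall t, T <= t -> 0 < g t) \/ (forall t, T <= t -> g t < 0).
Proof.
  intros Hc Hnz.
  assert (Hno_cross : forall (f : R -> R), (forall t, T <= t -> continuity_pt f t) ->
            (forall t, T <= t -> f t <> 0) -> 0 < f T -> forall t, T <= t -> 0 < f t).
  { intros f Hf Hf0 HfT t Ht. apply Rnot_le_lt. intros Hle.
    destruct (Rle_lt_or_eq_dec _ _ Hle) as [Hlt|Heq]; [|exact (Hf0 t Ht Heq)].
    destruct (Ranalysis5.IVT_interv (fun x => - f x) T t) as [z [Hz Hfz]].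
    - intros a Ha. apply continuity_pt_opp, Hf. lra.
    - destruct (Rle_lt_or_eq_dec _ _ Ht) as [|<-]; lra.
    - lra.
    - lra.
    - apply (Hf0 z); lra. }
  destruct (Rlt_dec 0 (g T)) as [Hpos|Hnpos].
  - left. apply Hno_cross; assumption.
  - right. assert (g T <> 0) by (apply Hnz; lra).
    intros t Ht. assert (0 < - g t); [|lra].
    apply (Hno_cross (fun t => - g t)); [| |lra|exact Ht].
    + intros s Hs. apply continuity_pt_opp, Hc, Hs.
    + intros s Hs Hz. apply (Hnz s Hs). lra.
Qed.

Lemma is_derive_shift (f : R -> R) h t l : is_derive f (t + h) l ->
  is_derive (fun r => f (r + h)) t l.
Proof.
  intros Hd. replace l with (scal 1 l) by apply (scal_one (K := R_Ring)).
  apply (is_derive_comp f (fun r => r + h)); [exact Hd|].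
  auto_derive; [exact I | ring].
Qed.

Lemma filterlim_lipschitz_comp {T : Type} {F : (T -> Prop) -> Prop} {FF : Filter F}
    (G : R -> R -> R) (D : R -> R -> Prop) L (x y : T -> R) a s : 0 <= L ->
  (forall a s b r, D a s -> D b r -> Rabs (G a s - G b r) <= L * (Rabs (a - b) + Rabs (s - r))) ->
  D a s -> F (fun t => D (x t) (y t)) ->
  filterlim x F (locally a) -> filterlim y F (locally s) ->
  filterlim (fun t => G (x t) (y t)) F (locally (G a s)).
Proof.
  intros HL HG Has HD Hx Hy. apply filterlim_locally. intros eps.
  assert (He : 0 < eps / (2 * (L + 1))).
  { apply Rdiv_lt_0_compat; [apply cond_pos | lra]. }
  rewrite filterlim_locally in Hx, Hy.
  generalize (filter_and _ _ HD (filter_and _ _ (Hx (mkposreal _ He)) (Hy (mkposreal _ He)))).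
  apply filter_imp. intros t [HDt [Hxt Hyt]].
  change (Rabs (x t - a) < eps / (2 * (L + 1))) in Hxt.
  change (Rabs (y t - s) < eps / (2 * (L + 1))) in Hyt.
  change (Rabs (G (x t) (y t) - G a s) < eps).
  eapply Rle_lt_trans; [apply (HG _ _ _ _ HDt Has)|].
  assert (Hsum : Rabs (x t - a) + Rabs (y t - s) < eps / (L + 1)).
  { replace (eps / (L + 1)) with (2 * (eps / (2 * (L + 1)))) by (field; lra). lra. }
  pose proof (cond_pos eps).
  apply Rle_lt_trans with (L * (eps / (L + 1))).
  - apply Rmult_le_compat_l; lra.
  - apply (Rmult_lt_reg_r (L + 1)); [lra|].
    replace (L * (eps / (L + 1)) * (L + 1)) with (L * eps) by (field; lra). nra.
Qed.

Section CooperativeSystem.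

Variables (Ga Gs : R -> R -> R) (ma Ma ms Ms K : R).

Definition in_rect (a s : R) : Prop := ma <= a <= Ma /\ ms <= s <= Ms.

Definition lipschitz_on_rect (G : R -> R -> R) : Prop :=
  forall a s b r, in_rect a s -> in_rect b r ->
    Rabs (G a s - G b r) <= K * (Rabs (a - b) + Rabs (s - r)).

Hypothesis K_ge0 : 0 <= K.
Hypothesis Ga_lipschitz : lipschitz_on_rect Ga.
Hypothesis Gs_lipschitz : lipschitz_on_rect Gs.
Hypothesis Ga_cooperative : forall a s r, in_rect a s -> in_rect a r -> s <= r -> Ga a s <= Ga a r.
Hypothesis Gs_cooperative : forall a b s, in_rect a s -> in_rect b s -> a <= b -> Gs a s <= Gs b s.

Lemma Ga_one_sided a s b r : in_rect a s -> in_rect b r -> b < a ->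
  Ga a s - Ga b r <= K * ((a - b) + pos_part (s - r)).
Proof.
  intros Has Hbr Hba.
  assert (Hmax : in_rect a (Rmax s r)).
  { destruct Has, Hbr. split; [assumption|]. unfold Rmax. destruct (Rle_dec s r); lra. }
  assert (Ga a s <= Ga a (Rmax s r)) by (apply Ga_cooperative; auto; apply Rmax_l).
  pose proof (Ga_lipschitz a (Rmax s r) b r Hmax Hbr) as HL.
  rewrite Rmax_sub_pos_part, (Rabs_pos_eq (a - b)), (Rabs_pos_eq (pos_part _)) in HL
    by (try apply pos_part_ge0; lra).
  pose proof (Rle_abs (Ga a (Rmax s r) - Ga b r)). lra.
Qed.

Lemma Gs_one_sided a s b r : in_rect a s -> in_rect b r -> r < s ->
  Gs a s - Gs b r <= K * ((s - r) + pos_part (a - b)).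
Proof.
  intros Has Hbr Hrs.
  assert (Hmax : in_rect (Rmax a b) s).
  { destruct Has, Hbr. split; [|assumption]. unfold Rmax. destruct (Rle_dec a b); lra. }
  assert (Gs a s <= Gs (Rmax a b) s) by (apply Gs_cooperative; auto; apply Rmax_l).
  pose proof (Gs_lipschitz (Rmax a b) s b r Hmax Hbr) as HL.
  rewrite Rmax_sub_pos_part, (Rabs_pos_eq (s - r)), (Rabs_pos_eq (pos_part _)) in HL
    by (try apply pos_part_ge0; lra).
  pose proof (Rle_abs (Gs (Rmax a b) s - Gs b r)). lra.
Qed.

Lemma solutions_comparison (Xa Xs Ya Ys : R -> R) t0 :
  (forall t, t0 <= t -> is_derive Xa t (Ga (Xa t) (Xs t))) ->
  (forall t, t0 <= t -> is_derive Xs t (Gs (Xa t) (Xs t))) ->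
  (forall t, t0 <= t -> is_derive Ya t (Ga (Ya t) (Ys t))) ->
  (forall t, t0 <= t -> is_derive Ys t (Gs (Ya t) (Ys t))) ->
  (forall t, t0 <= t -> in_rect (Xa t) (Xs t) /\ in_rect (Ya t) (Ys t)) ->
  forall t, t0 <= t ->
    pos_part (Xa t - Ya t) ^ 2 + pos_part (Xs t - Ys t) ^ 2 <=
    exp (4 * K * (t - t0)) * (pos_part (Xa t0 - Ya t0) ^ 2 + pos_part (Xs t0 - Ys t0) ^ 2).
Proof.
  intros DXa DXs DYa DYs Hin.
  apply (pos_part_energy_bound (fun t => Xa t - Ya t) (fun t => Xs t - Ys t)
           (fun t => Ga (Xa t) (Xs t) - Ga (Ya t) (Ys t))
           (fun t => Gs (Xa t) (Xs t) - Gs (Ya t) (Ys t))); try assumption.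
  - intros t Ht. apply (is_derive_minus Xa Ya); auto.
  - intros t Ht. apply (is_derive_minus Xs Ys); auto.
  - intros t Ht Hd. destruct (Hin t Ht). apply Ga_one_sided; auto; lra.
  - intros t Ht Hd. destruct (Hin t Ht). apply Gs_one_sided; auto; lra.
Qed.

Variables xa xs : R -> R.
Hypothesis xa_ode : forall t, 0 < t -> is_derive xa t (Ga (xa t) (xs t)).
Hypothesis xs_ode : forall t, 0 < t -> is_derive xs t (Gs (xa t) (xs t)).
Hypothesis x_in_rect : forall t, 0 <= t -> in_rect (xa t) (xs t).

Lemma trajectory_shift_comparison h t0 t : 0 < h -> 0 < t0 -> t0 <= t ->
  (pos_part (xa t - xa (t + h)) ^ 2 + pos_part (xs t - xs (t + h)) ^ 2 <=
   exp (4 * K * (t - t0)) *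
     (pos_part (xa t0 - xa (t0 + h)) ^ 2 + pos_part (xs t0 - xs (t0 + h)) ^ 2)) /\
  (pos_part (xa (t + h) - xa t) ^ 2 + pos_part (xs (t + h) - xs t) ^ 2 <=
   exp (4 * K * (t - t0)) *
     (pos_part (xa (t0 + h) - xa t0) ^ 2 + pos_part (xs (t0 + h) - xs t0) ^ 2)).
Proof.
  intros Hh Ht0 Ht.
  assert (Dxa : forall r, t0 <= r -> is_derive xa r (Ga (xa r) (xs r))) by
    (intros r Hr; apply xa_ode; lra).
  assert (Dxs : forall r, t0 <= r -> is_derive xs r (Gs (xa r) (xs r))) by
    (intros r Hr; apply xs_ode; lra).
  assert (Dya : forall r, t0 <= r ->
            is_derive (fun r => xa (r + h)) r (Ga (xa (r + h)) (xs (r + h)))) by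
    (intros r Hr; apply is_derive_shift, xa_ode; lra).
  assert (Dys : forall r, t0 <= r ->
            is_derive (fun r => xs (r + h)) r (Gs (xa (r + h)) (xs (r + h)))) by
    (intros r Hr; apply is_derive_shift, xs_ode; lra).
  assert (Hin : forall r, t0 <= r -> in_rect (xa r) (xs r) /\ in_rect (xa (r + h)) (xs (r + h)))
    by (intros r Hr; split; apply x_in_rect; lra).
  split.
  - exact (solutions_comparison _ _ _ _ t0 Dxa Dxs Dya Dys Hin t Ht).
  - refine (solutions_comparison _ _ _ _ t0 Dya Dys Dxa Dxs _ t Ht).
    intros r Hr. destruct (Hin r Hr). split; assumption.
Qed.

Lemma field_nonneg_propagates t0 : 0 < t0 ->
  0 <= Ga (xa t0) (xs t0) -> 0 <= Gs (xa t0) (xs t0) ->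
  forall t, t0 <= t -> 0 <= Ga (xa t) (xs t) /\ 0 <= Gs (xa t) (xs t).
Proof.
  intros Ht0 Ha0 Hs0 t Ht.
  apply (derivs_nonneg_of_shift_comparison xa xs t0 t (exp (4 * K * (t - t0)))
           (Ga (xa t0) (xs t0)) (Gs (xa t0) (xs t0))); try assumption.
  - apply Rlt_le, exp_pos.
  - intros h Hh. apply (trajectory_shift_comparison h t0 t Hh Ht0 Ht).
  - apply xa_ode, Ht0.
  - apply xs_ode, Ht0.
  - apply xa_ode. lra.
  - apply xs_ode. lra.
Qed.

Lemma field_nonpos_propagates t0 : 0 < t0 ->
  Ga (xa t0) (xs t0) <= 0 -> Gs (xa t0) (xs t0) <= 0 ->
  forall t, t0 <= t -> Ga (xa t) (xs t) <= 0 /\ Gs (xa t) (xs t) <= 0.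
Proof.
  intros Ht0 Ha0 Hs0 t Ht.
  assert (Dopp : forall (f : R -> R) (G : R -> R -> R) r, 0 < r ->
            (forall r, 0 < r -> is_derive f r (G (xa r) (xs r))) ->
            is_derive (fun r => - f r) r (- G (xa r) (xs r))).
  { intros f G r Hr Hf. apply (is_derive_opp f r _ (Hf r Hr)). }
  assert (Hswap : forall u v, - u - - v = v - u) by (intros; ring).
  destruct (derivs_nonneg_of_shift_comparison (fun r => - xa r) (fun r => - xs r) t0 t
              (exp (4 * K * (t - t0))) (- Ga (xa t0) (xs t0)) (- Gs (xa t0) (xs t0))
              (- Ga (xa t) (xs t)) (- Gs (xa t) (xs t))) as [Ha Hs]; try lra.
  - apply Rlt_le, exp_pos.
  - intros h Hh. rewrite !Hswap. apply (trajectory_shift_comparison h t0 t Hh Ht0 Ht).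
  - apply Dopp; assumption.
  - apply Dopp; assumption.
  - apply Dopp; [lra | assumption].
  - apply Dopp; [lra | assumption].
Qed.

Lemma field_along_trajectory_continuous (G : R -> R -> R) : lipschitz_on_rect G ->
  forall t, 0 < t -> continuity_pt (fun r => G (xa r) (xs r)) t.
Proof.
  intros HG t Ht. apply continuity_pt_filterlim.
  apply (filterlim_lipschitz_comp G in_rect K); try assumption.
  - apply x_in_rect. lra.
  - exists (mkposreal t Ht). intros r Hr. apply x_in_rect.
    change (Rabs (r - t) < t) in Hr. apply Rabs_lt_between' in Hr. lra.
  - apply (is_derive_continuous xa t _ (xa_ode t Ht)).
  - apply (is_derive_continuous xs t _ (xs_ode t Ht)).
Qed.

Lemma field_along_trajectory_is_lim (G : R -> R -> R) a s : lipschitz_on_rect G ->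
  in_rect a s -> is_lim xa p_infty a -> is_lim xs p_infty s ->
  is_lim (fun t => G (xa t) (xs t)) p_infty (G a s).
Proof.
  intros HG Has Ha Hs.
  apply (filterlim_lipschitz_comp G in_rect K); try assumption.
  exists 0. intros t Ht. apply x_in_rect. lra.
Qed.

Lemma trajectory_eventually_monotone :
  exists T, 0 < T /\ monotone_from T xa /\ monotone_from T xs.
Proof.
  assert (Hmono : forall T, 0 < T ->
    ((forall t, T <= t -> 0 <= Ga (xa t) (xs t)) \/ (forall t, T <= t -> Ga (xa t) (xs t) <= 0)) ->
    ((forall t, T <= t -> 0 <= Gs (xa t) (xs t)) \/ (forall t, T <= t -> Gs (xa t) (xs t) <= 0)) ->
    exists T, 0 < T /\ monotone_from T xa /\ monotone_from T xs).
  { intros T HT Hsa Hss. exists T. split; [exact HT | split].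
    - apply (monotone_from_of_deriv_sign xa (fun t => Ga (xa t) (xs t))); [|exact Hsa].
      intros t Ht. apply xa_ode. lra.
    - apply (monotone_from_of_deriv_sign xs (fun t => Gs (xa t) (xs t))); [|exact Hss].
      intros t Ht. apply xs_ode. lra. }
  destruct (classic (exists t0, 0 < t0 /\
              0 <= Ga (xa t0) (xs t0) /\ 0 <= Gs (xa t0) (xs t0))) as [[t0 [Ht0 [Ha Hs]]]|Hnn].
  { apply (Hmono t0 Ht0); left; intros t Ht; apply (field_nonneg_propagates t0); assumption. }
  destruct (classic (exists t0, 0 < t0 /\
              Ga (xa t0) (xs t0) <= 0 /\ Gs (xa t0) (xs t0) <= 0)) as [[t0 [Ht0 [Ha Hs]]]|Hnp].
  { apply (Hmono t0 Ht0); right; intros t Ht; apply (field_nonpos_propagates t0); assumption. }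
  (* A zero of either component would now put the field in a closed quadrant. *)
  assert (Hnz : forall t, 0 < t -> Ga (xa t) (xs t) <> 0 /\ Gs (xa t) (xs t) <> 0).
  { intros t Ht. split; intros Hz;
      destruct (Rle_dec 0 (Gs (xa t) (xs t))), (Rle_dec 0 (Ga (xa t) (xs t)));
      solve [apply Hnn; exists t; repeat split; lra | apply Hnp; exists t; repeat split; lra]. }
  assert (Hsign : forall G, lipschitz_on_rect G -> (forall t, 0 < t -> G (xa t) (xs t) <> 0) ->
    (forall t, 1 <= t -> 0 <= G (xa t) (xs t)) \/ (forall t, 1 <= t -> G (xa t) (xs t) <= 0)).
  { intros G HG HGnz.
    destruct (continuous_nonvanishing_constant_sign (fun r => G (xa r) (xs r)) 1) as [Hp|Hn].
    - intros t Ht. apply field_along_trajectory_continuous; [exact HG | lra].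
    - intros t Ht. apply HGnz. lra.
    - left. intros t Ht. apply Rlt_le, Hp, Ht.
    - right. intros t Ht. apply Rlt_le, Hn, Ht. }
  apply (Hmono 1 Rlt_0_1).
  - apply Hsign; [exact Ga_lipschitz | intros t Ht; apply Hnz, Ht].
  - apply Hsign; [exact Gs_lipschitz | intros t Ht; apply Hnz, Ht].
Qed.

Theorem cooperative_trajectory_converges :
  (exists a s, Ga a s = 0 /\ Gs a s = 0 /\ is_lim xa p_infty a /\ is_lim xs p_infty s) /\
  (exists T, 0 < T /\ monotone_from T xa /\ monotone_from T xs).
Proof.
  destruct trajectory_eventually_monotone as [T [HT [Hma Hms]]].
  destruct (monotone_bounded_is_lim xa T ma Ma Hma) as [a [Ha Has]].
  { intros t Ht. apply x_in_rect. lra. }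
  destruct (monotone_bounded_is_lim xs T ms Ms Hms) as [s [Hs Hss]].
  { intros t Ht. apply x_in_rect. lra. }
  assert (Hin : in_rect a s) by (split; assumption).
  split; [|exists T; auto].
  exists a, s. repeat split; try assumption.
  - apply (is_lim_derive_at_infinity_zero xa (fun t => Ga (xa t) (xs t)) a); try assumption.
    apply field_along_trajectory_is_lim; assumption.
  - apply (is_lim_derive_at_infinity_zero xs (fun t => Gs (xa t) (xs t)) s); try assumption.
    apply field_along_trajectory_is_lim; assumption.
Qed.

End CooperativeSystem.

Lemma lipschitz_on_rect_div (F : R -> R -> R) ma Ma ms Ms Kf K g : 0 < g -> Kf / g <= K ->
  lipschitz_on_rect ma Ma ms Ms Kf F -> lipschitz_on_rect ma Ma ms Ms K (fun a s => F a s / g).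
Proof.
  intros Hg HK HF a s b r Has Hbr.
  replace (F a s / g - F b r / g) with ((F a s - F b r) / g) by (field; lra).
  unfold Rdiv. rewrite Rabs_mult, (Rabs_pos_eq (/ g)) by (apply Rlt_le, Rinv_0_lt_compat, Hg).
  pose proof (Rabs_pos (a - b)). pose proof (Rabs_pos (s - r)).
  apply Rle_trans with (Kf / g * (Rabs (a - b) + Rabs (s - r))).
  - unfold Rdiv. rewrite (Rmult_comm Kf), Rmult_assoc, (Rmult_comm (/ g)).
    apply Rmult_le_compat_r; [apply Rlt_le, Rinv_0_lt_compat, Hg | apply HF; assumption].
  - apply Rmult_le_compat_r; lra.
Qed.

Lemma in_centered_rect_abs_le A B a s : 0 <= A -> 0 <= B ->
  in_rect (- A) A (- B) B a s -> Rabs a <= A + B /\ Rabs s <= A + B.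
Proof. intros HA HB [Ha Hs]. split; apply Rabs_le; lra. Qed.

Definition signed_quartic (x : R) : R := Rabs x ^ 3 * x.

Lemma signed_quartic_nonneg x : 0 <= x -> signed_quartic x = x ^ 4.
Proof. intros Hx. unfold signed_quartic. rewrite Rabs_pos_eq by exact Hx. ring. Qed.

Lemma signed_quartic_nonpos x : x <= 0 -> signed_quartic x = - (- x) ^ 4.
Proof. intros Hx. unfold signed_quartic. rewrite Rabs_left1 by exact Hx. ring. Qed.

Lemma pow4_diff_le x y R : 0 <= y -> y <= x -> x <= R -> x ^ 4 - y ^ 4 <= 4 * R ^ 3 * (x - y).
Proof.
  intros Hy Hyx HxR.
  replace (x ^ 4 - y ^ 4) with ((x - y) * ((x + y) * (x * x + y * y))) by ring.
  assert ((x + y) * (x * x + y * y) <= 4 * R ^ 3).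
  { assert (x * x + y * y <= 2 * (R * R)) by nra. simpl. nra. }
  nra.
Qed.

Lemma signed_quartic_le x y R : Rabs x <= R -> Rabs y <= R -> y <= x ->
  0 <= signed_quartic x - signed_quartic y <= 4 * R ^ 3 * (x - y).
Proof.
  intros Hx Hy Hyx. apply Rabs_le_between in Hx. apply Rabs_le_between in Hy.
  assert (HR3 : 0 <= R ^ 3) by (apply pow_le; lra).
  destruct (Rle_dec 0 y) as [Hy0|Hy0]; [|destruct (Rle_dec 0 x) as [Hx0|Hx0]].
  - rewrite !signed_quartic_nonneg by lra.
    pose proof (pow4_diff_le x y R Hy0 Hyx ltac:(lra)).
    assert (y ^ 4 <= x ^ 4) by (apply pow_incr; lra). lra.
  - rewrite (signed_quartic_nonneg x), (signed_quartic_nonpos y) by lra.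
    pose proof (pow4_diff_le x 0 R ltac:(lra) Hx0 ltac:(lra)).
    pose proof (pow4_diff_le (- y) 0 R ltac:(lra) ltac:(lra) ltac:(lra)).
    assert (0 <= x ^ 4) by (apply pow_le; lra).
    assert (0 <= (- y) ^ 4) by (apply pow_le; lra).
    rewrite pow_i in * by auto with arith. lra.
  - rewrite !signed_quartic_nonpos by lra.
    pose proof (pow4_diff_le (- y) (- x) R ltac:(lra) ltac:(lra) ltac:(lra)).
    assert ((- x) ^ 4 <= (- y) ^ 4) by (apply pow_incr; lra). lra.
Qed.

Lemma signed_quartic_nondecreasing x y : y <= x -> signed_quartic y <= signed_quartic x.
Proof.
  intros Hyx. set (R := Rmax (Rabs x) (Rabs y)).
  pose proof (signed_quartic_le x y R (Rmax_l _ _) (Rmax_r _ _) Hyx). lra.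
Qed.

Lemma signed_quartic_lipschitz x y R : Rabs x <= R -> Rabs y <= R ->
  Rabs (signed_quartic x - signed_quartic y) <= 4 * R ^ 3 * Rabs (x - y).
Proof.
  intros Hx Hy. destruct (Rle_dec y x) as [Hyx|Hxy].
  - pose proof (signed_quartic_le x y R Hx Hy Hyx).
    rewrite !Rabs_pos_eq by lra. lra.
  - pose proof (signed_quartic_le y x R Hy Hx ltac:(lra)).
    rewrite !Rabs_left1 by lra. lra.
Qed.

Lemma Rabs_scale_le c x B : Rabs x <= B -> Rabs (c * x) <= Rabs c * B.
Proof. intros Hx. rewrite Rabs_mult. apply Rmult_le_compat_l; [apply Rabs_pos | exact Hx]. Qed.

Lemma lipschitz_le_at_0 (f : R -> R) L x :
  (forall x y, Rabs (f x - f y) <= L * Rabs (x - y)) -> f x <= f 0 + L * Rabs x.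
Proof.
  intros Hf. specialize (Hf x 0). rewrite Rminus_0_r in Hf.
  pose proof (Rle_abs (f x - f 0)). lra.
Qed.

Lemma quartic_dominates_affine c B : 0 < c ->
  Rbar_locally p_infty (fun A => B * (A + 1) < c * A ^ 4).
Proof.
  intros Hc. exists (Rmax 1 (2 * Rabs B / c)). intros A HA.
  pose proof (Rmax_l 1 (2 * Rabs B / c)). pose proof (Rmax_r 1 (2 * Rabs B / c)).
  assert (HcA : 2 * Rabs B < c * A).
  { apply (Rmult_lt_reg_r (/ c)); [apply Rinv_0_lt_compat, Hc|].
    replace (c * A * / c) with A by (field; lra). unfold Rdiv in *. lra. }
  pose proof (Rle_abs B). pose proof (Rabs_pos B).
  assert (B * (A + 1) <= 2 * Rabs B * A) by nra.
  assert (c * A ^ 2 <= c * A ^ 4).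
  { apply Rmult_le_compat_l; [lra|]. replace (A ^ 4) with (A ^ 2 * A ^ 2) by ring.
    assert (1 <= A ^ 2) by nra. nra. }
  nra.
Qed.

Lemma exists_fourth_root c : 0 < c -> exists k, 0 < k /\ k ^ 4 = c.
Proof.
  intros Hc. set (r := sqrt (sqrt c)).
  exists r. split; [apply sqrt_lt_R0, sqrt_lt_R0, Hc|].
  replace (r ^ 4) with ((r * r) * (r * r)) by ring. unfold r.
  rewrite sqrt_sqrt by (apply Rlt_le, sqrt_lt_R0, Hc). apply sqrt_sqrt. lra.
Qed.

Lemma Rdiv_pos_eq_0 x g : 0 < g -> x / g = 0 -> x = 0.
Proof. intros Hg Hx. replace x with (x / g * g) by (field; lra). rewrite Hx. ring. Qed.

Section RadiativeBalance.

Variables (lam q sigB epsa : R) (ba bs : R -> R).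
Hypotheses (hlam : 0 <= lam) (hq : 0 <= q) (hsig : 0 < sigB) (heps0 : 0 < epsa).

Lemma Fa_expand a s : Fa lam q sigB epsa ba a s =
  - lam * (a - s) + epsa * sigB * signed_quartic s
  - 2 * epsa * sigB * signed_quartic a + q * ba a.
Proof. reflexivity. Qed.

Lemma Fs_expand a s : Fs lam q sigB epsa bs a s =
  - lam * (s - a) - sigB * signed_quartic s + epsa * sigB * signed_quartic a + q * bs s.
Proof. reflexivity. Qed.

Lemma Fa_nondecreasing_s a s r : s <= r ->
  Fa lam q sigB epsa ba a s <= Fa lam q sigB epsa ba a r.
Proof.
  intros Hsr. rewrite !Fa_expand. pose proof (signed_quartic_nondecreasing r s Hsr).
  assert (0 <= epsa * sigB) by nra. nra.
Qed.

Lemma Fs_nondecreasing_a a b s : a <= b ->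
  Fs lam q sigB epsa bs a s <= Fs lam q sigB epsa bs b s.
Proof.
  intros Hab. rewrite !Fs_expand. pose proof (signed_quartic_nondecreasing b a Hab).
  assert (0 <= epsa * sigB) by nra. nra.
Qed.

Lemma Fa_lipschitz L1 R a s b r :
  (forall x y, Rabs (ba x - ba y) <= L1 * Rabs (x - y)) -> 0 <= L1 ->
  Rabs a <= R -> Rabs s <= R -> Rabs b <= R -> Rabs r <= R ->
  Rabs (Fa lam q sigB epsa ba a s - Fa lam q sigB epsa ba b r) <=
  (lam + 2 * epsa * sigB * (4 * R ^ 3) + q * L1) * (Rabs (a - b) + Rabs (s - r)).
Proof.
  intros Hba HL1 Ha Hs Hb Hr. rewrite !Fa_expand.
  replace (_ - _) with ((- lam) * (a - b) + lam * (s - r)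
    + (epsa * sigB) * (signed_quartic s - signed_quartic r)
    + (- 2 * (epsa * sigB)) * (signed_quartic a - signed_quartic b)
    + q * (ba a - ba b)) by ring.
  assert (HR : 0 <= 4 * R ^ 3) by (assert (0 <= R) by (pose proof (Rabs_pos a); lra);
                                   pose proof (pow_le R 3); lra).
  pose proof (Rabs_scale_le (- lam) (a - b) _ (Rle_refl _)) as T1.
  pose proof (Rabs_scale_le lam (s - r) _ (Rle_refl _)) as T2.
  pose proof (Rabs_scale_le (epsa * sigB) _ _ (signed_quartic_lipschitz s r R Hs Hr)) as T3.
  pose proof (Rabs_scale_le (- 2 * (epsa * sigB)) _ _
                (signed_quartic_lipschitz a b R Ha Hb)) as T4.
  pose proof (Rabs_scale_le q _ _ (Hba a b)) as T5.
  rewrite Rabs_Ropp, (Rabs_pos_eq lam) in T1 by lra.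
  rewrite (Rabs_pos_eq lam) in T2 by lra.
  rewrite (Rabs_pos_eq (epsa * sigB)) in T3 by nra.
  rewrite (Rabs_left1 (- 2 * (epsa * sigB))) in T4 by nra.
  rewrite (Rabs_pos_eq q) in T5 by lra.
  apply Rabs_le_between in T1, T2, T3, T4, T5. apply Rabs_le.
  pose proof (Rabs_pos (a - b)). pose proof (Rabs_pos (s - r)).
  assert (0 <= epsa * sigB * (4 * R ^ 3)) by (apply Rmult_le_pos; nra).
  assert (0 <= epsa * sigB * (4 * R ^ 3) * Rabs (a - b)) by (apply Rmult_le_pos; lra).
  assert (0 <= epsa * sigB * (4 * R ^ 3) * Rabs (s - r)) by (apply Rmult_le_pos; lra).
  assert (0 <= q * L1 * Rabs (s - r)) by (apply Rmult_le_pos; nra).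
  split; lra.
Qed.

Lemma Fs_lipschitz L2 R a s b r :
  (forall x y, Rabs (bs x - bs y) <= L2 * Rabs (x - y)) -> 0 <= L2 ->
  Rabs a <= R -> Rabs s <= R -> Rabs b <= R -> Rabs r <= R ->
  Rabs (Fs lam q sigB epsa bs a s - Fs lam q sigB epsa bs b r) <=
  (lam + (1 + epsa) * sigB * (4 * R ^ 3) + q * L2) * (Rabs (a - b) + Rabs (s - r)).
Proof.
  intros Hbs HL2 Ha Hs Hb Hr. rewrite !Fs_expand.
  replace (_ - _) with (lam * (a - b) + (- lam) * (s - r)
    + (- sigB) * (signed_quartic s - signed_quartic r)
    + (epsa * sigB) * (signed_quartic a - signed_quartic b)
    + q * (bs s - bs r)) by ring.
  assert (HR : 0 <= 4 * R ^ 3) by (assert (0 <= R) by (pose proof (Rabs_pos a); lra);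
                                   pose proof (pow_le R 3); lra).
  pose proof (Rabs_scale_le lam (a - b) _ (Rle_refl _)) as T1.
  pose proof (Rabs_scale_le (- lam) (s - r) _ (Rle_refl _)) as T2.
  pose proof (Rabs_scale_le (- sigB) _ _ (signed_quartic_lipschitz s r R Hs Hr)) as T3.
  pose proof (Rabs_scale_le (epsa * sigB) _ _ (signed_quartic_lipschitz a b R Ha Hb)) as T4.
  pose proof (Rabs_scale_le q _ _ (Hbs s r)) as T5.
  rewrite (Rabs_pos_eq lam) in T1 by lra.
  rewrite Rabs_Ropp, (Rabs_pos_eq lam) in T2 by lra.
  rewrite Rabs_Ropp, (Rabs_pos_eq sigB) in T3 by lra.
  rewrite (Rabs_pos_eq (epsa * sigB)) in T4 by nra.
  rewrite (Rabs_pos_eq q) in T5 by lra.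
  apply Rabs_le_between in T1, T2, T3, T4, T5. apply Rabs_le.
  pose proof (Rabs_pos (a - b)). pose proof (Rabs_pos (s - r)).
  assert (0 <= sigB * (4 * R ^ 3) * Rabs (a - b)) by (apply Rmult_le_pos; nra).
  assert (0 <= epsa * sigB * (4 * R ^ 3) * Rabs (s - r)).
  { apply Rmult_le_pos; [|lra]. apply Rmult_le_pos; nra. }
  assert (0 <= q * L2 * Rabs (a - b)) by (apply Rmult_le_pos; nra).
  split; lra.
Qed.

(* [k ^ 4] lies strictly between [epsa] and [2], so on the rectangle with corners
   [(A, k A)] and [(- A, - k A)] the quartic terms of both components point inwards. *)
Lemma corner_field_signs L1 L2 k : epsa < 2 ->
  (forall x y, Rabs (ba x - ba y) <= L1 * Rabs (x - y)) -> 0 <= L1 ->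
  (forall x y, Rabs (bs x - bs y) <= L2 * Rabs (x - y)) -> 0 <= L2 ->
  (forall x, 0 <= ba x) -> (forall x, 0 <= bs x) ->
  0 < k -> k ^ 4 = (epsa + 2) / 2 ->
  Rbar_locally p_infty (fun A =>
    Fa lam q sigB epsa ba A (k * A) < 0 /\ Fs lam q sigB epsa bs A (k * A) < 0 /\
    0 < Fa lam q sigB epsa ba (- A) (- (k * A)) /\ 0 < Fs lam q sigB epsa bs (- A) (- (k * A))).
Proof.
  intros heps2 Hba HL1 Hbs HL2 hba hbs Hk Hk4.
  set (d := (2 - epsa) / 2). assert (Hd : 0 < d) by (unfold d; lra).
  set (B := lam * Rabs (k - 1) + q * (L1 + L2 * k + ba 0 + bs 0)).
  assert (Hpos : Rbar_locally p_infty (fun A => 0 < A)) by (exists 0; auto).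
  assert (Hca : 0 < epsa * sigB * d) by (repeat apply Rmult_lt_0_compat; lra).
  assert (Hcs : 0 < sigB * d) by (apply Rmult_lt_0_compat; lra).
  generalize (filter_and _ _ Hpos (filter_and _ _
    (quartic_dominates_affine _ B Hca) (quartic_dominates_affine _ B Hcs))).
  apply filter_imp. intros A [HA [Ha Hs]].
  rewrite !Fa_expand, !Fs_expand.
  rewrite (signed_quartic_nonneg A), (signed_quartic_nonneg (k * A)),
    (signed_quartic_nonpos (- A)), (signed_quartic_nonpos (- (k * A))) by nra.
  rewrite !Ropp_involutive, Rpow_mult_distr, Hk4.
  assert (Hlin : lam * ((k - 1) * A) <= lam * (Rabs (k - 1) * A) /\
                 lam * ((1 - k) * A) <= lam * (Rabs (k - 1) * A)).
  { split; apply Rmult_le_compat_l, Rmult_le_compat_r; try lra.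
    - apply Rle_abs.
    - rewrite <- Rabs_Ropp. replace (- (k - 1)) with (1 - k) by ring. apply Rle_abs. }
  assert (Hba_A : q * ba A <= q * ba 0 + q * L1 * A).
  { pose proof (lipschitz_le_at_0 ba L1 A Hba). rewrite Rabs_pos_eq in * by lra. nra. }
  assert (Hbs_kA : q * bs (k * A) <= q * bs 0 + q * L2 * k * A).
  { pose proof (lipschitz_le_at_0 bs L2 (k * A) Hbs). rewrite Rabs_pos_eq in * by nra. nra. }
  assert (0 <= q * ba (- A)) by (apply Rmult_le_pos; [lra | apply hba]).
  assert (0 <= q * bs (- (k * A))) by (apply Rmult_le_pos; [lra | apply hbs]).
  assert (HB : 0 <= lam * Rabs (k - 1) /\ 0 <= q * L1 /\ 0 <= q * L2 * k /\
               0 <= q * ba 0 /\ 0 <= q * bs 0).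
  { pose proof (Rabs_pos (k - 1)). pose proof (hba 0). pose proof (hbs 0).
    repeat split; repeat apply Rmult_le_pos; lra. }
  assert (HBA : 0 <= lam * Rabs (k - 1) * A /\ 0 <= q * L1 * A /\ 0 <= q * L2 * k * A /\
                0 <= q * ba 0 * A /\ 0 <= q * bs 0 * A).
  { repeat split; apply Rmult_le_pos; lra. }
  unfold B, d in *. repeat split; lra.
Qed.

Lemma Fa_faces gam A B : 0 < gam ->
  Fa lam q sigB epsa ba A B < 0 -> 0 < Fa lam q sigB epsa ba (- A) (- B) ->
  forall s, - B <= s <= B ->
    Fa lam q sigB epsa ba A s / gam < 0 /\ 0 < Fa lam q sigB epsa ba (- A) s / gam.
Proof.
  intros Hgam Hup Hlow s Hs. split.
  - apply Rdiv_neg_pos; [|exact Hgam].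
    eapply Rle_lt_trans; [apply Fa_nondecreasing_s, (proj2 Hs) | exact Hup].
  - apply Rdiv_lt_0_compat; [|exact Hgam].
    eapply Rlt_le_trans; [exact Hlow | apply Fa_nondecreasing_s, (proj1 Hs)].
Qed.

Lemma Fs_faces gam A B : 0 < gam ->
  Fs lam q sigB epsa bs A B < 0 -> 0 < Fs lam q sigB epsa bs (- A) (- B) ->
  forall a, - A <= a <= A ->
    Fs lam q sigB epsa bs a B / gam < 0 /\ 0 < Fs lam q sigB epsa bs a (- B) / gam.
Proof.
  intros Hgam Hup Hlow a Ha. split.
  - apply Rdiv_neg_pos; [|exact Hgam].
    eapply Rle_lt_trans; [apply Fs_nondecreasing_a, (proj2 Ha) | exact Hup].
  - apply Rdiv_lt_0_compat; [|exact Hgam].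
    eapply Rlt_le_trans; [exact Hlow | apply Fs_nondecreasing_a, (proj1 Ha)].
Qed.

Lemma invariant_rectangle_exists gam_a gam_s Ta0 Ts0 : epsa < 2 -> 0 < gam_a -> 0 < gam_s ->
  lipschitz ba -> lipschitz bs -> (forall x, 0 <= ba x) -> (forall x, 0 <= bs x) ->
  exists A B, Ta0 < A /\ Ts0 < B /\
    (forall s, - B <= s <= B ->
       Fa lam q sigB epsa ba A s / gam_a < 0 /\ 0 < Fa lam q sigB epsa ba (- A) s / gam_a) /\
    (forall a, - A <= a <= A ->
       Fs lam q sigB epsa bs a B / gam_s < 0 /\ 0 < Fs lam q sigB epsa bs a (- B) / gam_s).
Proof.
  intros heps2 hga hgs [L1 [HL1 Hba]] [L2 [HL2 Hbs]] hba hbs.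
  destruct (exists_fourth_root ((epsa + 2) / 2)) as [k [Hk Hk4]]; [lra|].
  assert (Hlarge : Rbar_locally p_infty (fun A => Ta0 < A /\ Ts0 < k * A)).
  { exists (Rmax Ta0 (Ts0 / k)). intros A HA.
    pose proof (Rmax_l Ta0 (Ts0 / k)). pose proof (Rmax_r Ta0 (Ts0 / k)).
    split; [lra|]. apply (Rmult_lt_reg_r (/ k)); [apply Rinv_0_lt_compat, Hk|].
    replace (k * A * / k) with A by (field; lra). unfold Rdiv in *. lra. }
  destruct (filter_ex _ (filter_and _ _ Hlarge
    (corner_field_signs L1 L2 k heps2 Hba HL1 Hbs HL2 hba hbs Hk Hk4)))
    as [A [[HA0 HkA0] [Ca [Cs [Ca' Cs']]]]].
  exists A, (k * A). split; [exact HA0 | split; [exact HkA0 | split]].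
  - exact (Fa_faces gam_a A (k * A) hga Ca Ca').
  - exact (Fs_faces gam_s A (k * A) hgs Cs Cs').
Qed.

Lemma scaled_fields_lipschitz_on_rect gam_a gam_s A B : 0 < gam_a -> 0 < gam_s ->
  0 <= A -> 0 <= B -> lipschitz ba -> lipschitz bs ->
  exists K, 0 <= K /\
    lipschitz_on_rect (- A) A (- B) B K (fun a s => Fa lam q sigB epsa ba a s / gam_a) /\
    lipschitz_on_rect (- A) A (- B) B K (fun a s => Fs lam q sigB epsa bs a s / gam_s).
Proof.
  intros hga hgs HA HB [L1 [HL1 Hba]] [L2 [HL2 Hbs]].
  set (R := A + B).
  set (Ka := lam + 2 * epsa * sigB * (4 * R ^ 3) + q * L1).
  set (Ks := lam + (1 + epsa) * sigB * (4 * R ^ 3) + q * L2).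
  assert (HR3 : 0 <= 4 * R ^ 3) by (assert (0 <= R ^ 3) by (apply pow_le; unfold R; lra); lra).
  assert (HKa : 0 <= Ka / gam_a).
  { apply Rdiv_le_0_compat; [|exact hga]. unfold Ka.
    assert (0 <= epsa * sigB * (4 * R ^ 3)) by (apply Rmult_le_pos; nra). nra. }
  assert (HKs : 0 <= Ks / gam_s).
  { apply Rdiv_le_0_compat; [|exact hgs]. unfold Ks.
    assert (0 <= (1 + epsa) * sigB * (4 * R ^ 3)) by (apply Rmult_le_pos; nra). nra. }
  exists (Ka / gam_a + Ks / gam_s). split; [lra|split].
  - apply (lipschitz_on_rect_div _ _ _ _ _ Ka); [exact hga | lra |].
    intros a s b r Has Hbr.
    destruct (in_centered_rect_abs_le A B a s HA HB Has).
    destruct (in_centered_rect_abs_le A B b r HA HB Hbr).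
    apply Fa_lipschitz; assumption.
  - apply (lipschitz_on_rect_div _ _ _ _ _ Ks); [exact hgs | lra |].
    intros a s b r Has Hbr.
    destruct (in_centered_rect_abs_le A B a s HA HB Has).
    destruct (in_centered_rect_abs_le A B b r HA HB Hbr).
    apply Fs_lipschitz; assumption.
Qed.

End RadiativeBalance.

Theorem theorem4p6
  (gam_a gam_s lam q sigB epsa : R) (ba bs : R -> R)
  (hga : 0 < gam_a) (hgs : 0 < gam_s) (hlam : 0 <= lam) (hq : 0 < q)
  (hsig : 0 < sigB) (heps0 : 0 < epsa) (heps2 : epsa < 2)
  (hba_lip : lipschitz ba) (hbs_lip : lipschitz bs)
  (hba : forall x, 0 <= ba x) (hbs : forall x, 0 < bs x)
  (Ta0 Ts0 : R) (hTa0 : 0 <= Ta0) (hTs0 : 0 <= Ts0)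
  (Ta Ts : R -> R)
  (hinit_a : Ta 0 = Ta0) (hinit_s : Ts 0 = Ts0)
  (hcont_a : filterlim Ta (at_right 0) (locally (Ta 0)))
  (hcont_s : filterlim Ts (at_right 0) (locally (Ts 0)))
  (hode_a : forall t, 0 < t ->
     is_derive Ta t (Fa lam q sigB epsa ba (Ta t) (Ts t) / gam_a))
  (hode_s : forall t, 0 < t ->
     is_derive Ts t (Fs lam q sigB epsa bs (Ta t) (Ts t) / gam_s)) :
  (exists a s : R,
     is_equilibrium lam q sigB epsa ba bs a s /\
     is_lim Ta p_infty a /\ is_lim Ts p_infty s) /\
  (exists T : R, 0 <= T /\ monotone_from T Ta /\ monotone_from T Ts).
Proof.
  assert (hq0 : 0 <= q) by lra.
  assert (hbs0 : forall x, 0 <= bs x) by (intros x; apply Rlt_le, hbs).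
  destruct (invariant_rectangle_exists lam q sigB epsa ba bs hlam hq0 hsig heps0
              gam_a gam_s Ta0 Ts0 heps2 hga hgs hba_lip hbs_lip hba hbs0)
    as [A [B [HA [HB [Hfa Hfs]]]]].
  assert (Hrect := rectangle_forward_invariant
    (fun a s => Fa lam q sigB epsa ba a s / gam_a) (fun a s => Fs lam q sigB epsa bs a s / gam_s)
    Ta Ts (- A) A (- B) B hode_a hode_s hcont_a hcont_s Hfa Hfs ltac:(lra) ltac:(lra)).
  destruct (scaled_fields_lipschitz_on_rect lam q sigB epsa ba bs hlam hq0 hsig heps0
              gam_a gam_s A B hga hgs ltac:(lra) ltac:(lra) hba_lip hbs_lip)
    as [K [HK [HLa HLs]]].
  destruct (cooperative_trajectory_converges _ _ (- A) A (- B) B K HK HLa HLs)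
    with (xa := Ta) (xs := Ts) as [[a [s [Ha [Hs Hlim]]]] [T [HT Hmono]]];
    try assumption.
  - intros a s r _ _ Hsr. apply Rmult_le_compat_r; [apply Rlt_le, Rinv_0_lt_compat, hga|].
    apply Fa_nondecreasing_s; assumption.
  - intros a b s _ _ Hab. apply Rmult_le_compat_r; [apply Rlt_le, Rinv_0_lt_compat, hgs|].
    apply Fs_nondecreasing_a; assumption.
  - intros t Ht. destruct (Hrect t Ht). split; lra.
  - split; [|exists T; split; [lra | exact Hmono]].
    exists a, s. split; [split | exact Hlim].
    + apply (Rdiv_pos_eq_0 _ gam_a hga Ha).
    + apply (Rdiv_pos_eq_0 _ gam_s hgs Hs).
Qed.
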